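(* Let $a_1,\dots,a_n\in\mathbb{R}^d$ be the rows of $A$, let $k\ge1$ and $0<\epsilon<1$. Let $P$ be an $r$-dimensional linear subspace of $\mathbb{R}^d$ such that for all linear subspaces $W$ of dimension at most $k$, $$\sum_i\mathrm{dist}(a_i,P)-\sum_i\mathrm{dist}(a_i,P+W)\le\frac{\epsilon^2}{80}\mathrm{SubApx}_{k,1}(A).$$ Let $B\in\mathbb{R}^{d\times r}$ be an orthonormal basis for $P$ and set $\epsilon_c=\epsilon^2/6$. For each $i$ let $a_i^B\in\mathbb{R}^r$ satisfy $\mathrm{dist}(a_i,Ba_i^B)\le(1+\epsilon_c)\mathrm{dist}(a_i,P)$ and let $\mathrm{apx}_i$ satisfy $(1-\epsilon_c)\mathrm{dist}(a_i,P)\le\mathrm{apx}_i\le(1+\epsilon_c)\mathrm{dist}(a_i,P)$. Then for every shape $S$ lying in a $k$-dimensional subspace, $$\sum_i\sqrt{\mathrm{dist}(Ba_i^B,S)^2+\mathrm{apx}_i^2}=(1\pm5\epsilon)\sum_i\mathrm{dist}(a_i,S).$$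
   Context: $\mathrm{dist}(x,S)=\inf_{s\in S}\|x-s\|_2$. $\mathrm{SubApx}_{k,1}(A)=\min\{\sum_{i=1}^n\mathrm{dist}(a_i,Q): Q\text{ a linear subspace of }\mathbb{R}^d,\ \dim Q\le k\}$. $P+W$ is the span of $P\cup W$. A ''shape lying in a $k$-dimensional subspace'' is any nonempty set $S\subseteq\mathbb{R}^d$ contained in a linear subspace of dimension at most $k$. $x=(1\pm\epsilon)y$ means $(1-\epsilon)y\le x\le(1+\epsilon)y$. *)

(* classical reals. Vectors of R^d are functions nat -> R,
   of which only the coordinates j < d are ever inspected. *)
From Stdlib Require Import Reals Lra Lia Classical ClassicalEpsilon.
Open Scope R_scope.

Definition Vec := nat -> R.

Fixpoint fsum (n : nat) (f : nat -> R) : R :=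
  match n with
  | O => 0
  | S m => fsum m f + f m
  end.

Definition norm (d : nat) (x : Vec) : R := sqrt (fsum d (fun j => x j ^ 2)).

Definition vsub (x y : Vec) : Vec := fun j => x j - y j.

Definition is_inf (E : R -> Prop) (m : R) : Prop :=
  (forall y, E y -> m <= y) /\ (forall b, (forall y, E y -> b <= y) -> b <= m).

(* infimum (unspecified if it does not exist) *)
Definition Rinf (E : R -> Prop) : R :=
  epsilon (inhabits 0) (fun m => is_inf E m).

Definition setdist (d : nat) (x : Vec) (S : Vec -> Prop) : R :=
  Rinf (fun v => exists s, S s /\ v = norm d (vsub x s)).

(* matrix-vector product: the vector sum_{t<m} c t * vs t, where vs t are
   the m columns *)
Definition lincomb (d m : nat) (vs : nat -> Vec) (c : nat -> R) : Vec :=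
  fun j => fsum m (fun t => c t * vs t j).

Definition span (d m : nat) (vs : nat -> Vec) : Vec -> Prop :=
  fun x => exists c : nat -> R, forall j, (j < d)%nat -> x j = lincomb d m vs c j.

Definition catfam (m : nat) (vs ws : nat -> Vec) : nat -> Vec :=
  fun t => if Nat.ltb t m then vs t else ws (t - m)%nat.

(* SubApx_{k,1}(A) for the n rows a 0..n-1 : inf (= min) over linear subspaces
   Q of dimension <= k, i.e. spans of k vectors, of sum_i dist(a_i, Q) *)
Definition SubApx (d n k : nat) (a : nat -> Vec) : R :=
  Rinf (fun v => exists U : nat -> Vec,
          v = fsum n (fun i => setdist d (a i) (span d k U))).

Definition orthonormal (d r : nat) (B : nat -> Vec) : Prop :=
  forall s t, (s < r)%nat -> (t < r)%nat ->
    fsum d (fun j => B s j * B t j) = if Nat.eqb s t then 1 else 0.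

(* Fix a row a, let p be its orthogonal projection onto P, and put D = dist(a,P) = |a - p| and
   G = dist(a,P+W), where S lies in W. For s in S,
     |a - s|^2 = D^2 + |p - s|^2 + 2 <a - p, p - s>,
   and since the whole line through p and s lies in P + W, the quadratic t |-> |a - p + t (p - s)|^2
   stays above G^2, whence <a - p, p - s>^2 <= |p - s|^2 (D^2 - G^2). Hence dist(a,S) and
   sqrt(dist(p,S)^2 + D^2) differ by at most 2 sqrt(D^2 - G^2) <= eps D + 2 (D - G) / eps.
   Replacing p by B a^B and D by apx costs another 2 eps D, as |p - B a^B| <= eps D by Pythagoras.
   Summing over the rows, sum (D - G) <= eps^2/80 SubApx <= eps^2/80 sum dist(a_i,S) and
   sum G <= sum dist(a_i,S), so the total error is at most 5 eps sum dist(a_i,S). *)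

From Stdlib Require Import Reals Lra Lia Classical ClassicalEpsilon.
Open Scope R_scope.

Lemma fsum_ext n f g : (forall j, (j < n)%nat -> f j = g j) -> fsum n f = fsum n g.
Proof.
  induction n as [|n IH]; intros Hfg; simpl; [reflexivity|].
  rewrite (Hfg n) by lia. rewrite IH by (intros; apply Hfg; lia). reflexivity.
Qed.

Lemma fsum_add n f g : fsum n (fun j => f j + g j) = fsum n f + fsum n g.
Proof. induction n as [|n IH]; simpl; [ring|]. rewrite IH; ring. Qed.

Lemma fsum_sub n f g : fsum n (fun j => f j - g j) = fsum n f - fsum n g.
Proof. induction n as [|n IH]; simpl; [ring|]. rewrite IH; ring. Qed.

Lemma fsum_scal n c f : fsum n (fun j => c * f j) = c * fsum n f.
Proof. induction n as [|n IH]; simpl; [ring|]. rewrite IH; ring. Qed.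

Lemma fsum_eq0 n f : (forall j, (j < n)%nat -> f j = 0) -> fsum n f = 0.
Proof.
  induction n as [|n IH]; intros Hf; simpl; [reflexivity|].
  rewrite (Hf n) by lia. rewrite IH by (intros; apply Hf; lia). ring.
Qed.

Lemma fsum_le n f g : (forall j, (j < n)%nat -> f j <= g j) -> fsum n f <= fsum n g.
Proof.
  induction n as [|n IH]; intros Hfg; simpl; [lra|].
  pose proof (Hfg n ltac:(lia)). pose proof (IH ltac:(intros; apply Hfg; lia)). lra.
Qed.

Lemma fsum_ge0 n f : (forall j, (j < n)%nat -> 0 <= f j) -> 0 <= fsum n f.
Proof.
  intros Hf. replace 0 with (fsum n (fun _ => 0)) by (apply fsum_eq0; auto).
  now apply fsum_le.
Qed.

Lemma Rabs_fsum_sub_le n f g e :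
  (forall j, (j < n)%nat -> Rabs (f j - g j) <= e j) ->
  Rabs (fsum n f - fsum n g) <= fsum n e.
Proof.
  induction n as [|n IH]; intros Hfg; simpl.
  - rewrite Rminus_0_r, Rabs_R0. lra.
  - replace (fsum n f + f n - (fsum n g + g n)) with ((fsum n f - fsum n g) + (f n - g n)) by ring.
    pose proof (Rabs_triang (fsum n f - fsum n g) (f n - g n)).
    pose proof (Hfg n ltac:(lia)). pose proof (IH ltac:(intros; apply Hfg; lia)). lra.
Qed.

Lemma fsum_swap d m (F : nat -> nat -> R) :
  fsum d (fun j => fsum m (fun t => F t j)) = fsum m (fun t => fsum d (fun j => F t j)).
Proof.
  induction d as [|d IH]; simpl.
  - symmetry; now apply fsum_eq0.
  - rewrite IH, <- fsum_add. reflexivity.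
Qed.

Lemma fsum_add_len r k f : fsum (r + k) f = fsum r f + fsum k (fun t => f (r + t)%nat).
Proof.
  induction k as [|k IH]; simpl.
  - rewrite Nat.add_0_r; ring.
  - rewrite Nat.add_succ_r; simpl. rewrite IH; ring.
Qed.

Lemma fsum_kronecker r (c : nat -> R) s : (s < r)%nat ->
  fsum r (fun t => c t * (if Nat.eqb s t then 1 else 0)) = c s.
Proof.
  induction r as [|r IH]; intros Hs; [lia|]. simpl.
  destruct (Nat.eqb_spec s r) as [->|Hne].
  - rewrite fsum_eq0; [ring|]. intros j Hj. destruct (Nat.eqb_spec r j); [lia|ring].
  - rewrite IH by lia. ring.
Qed.

Definition dot (d : nat) (x y : Vec) : R := fsum d (fun j => x j * y j).

Lemma dot_ext d x x' y y' :
  (forall j, (j < d)%nat -> x j = x' j) -> (forall j, (j < d)%nat -> y j = y' j) ->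
  dot d x y = dot d x' y'.
Proof. intros Hx Hy; apply fsum_ext; intros; rewrite Hx, Hy by lia; ring. Qed.

Lemma dot_sym d x y : dot d x y = dot d y x.
Proof. apply fsum_ext; intros; ring. Qed.

Lemma dot_self_ge0 d x : 0 <= dot d x x.
Proof. apply fsum_ge0; intros; nra. Qed.

Lemma dot_vsub_l d x y z : dot d (vsub x y) z = dot d x z - dot d y z.
Proof. unfold dot, vsub. rewrite <- fsum_sub. apply fsum_ext; intros; ring. Qed.

Lemma dot_add_scal_self d x y t :
  dot d (fun j => x j + t * y j) (fun j => x j + t * y j)
  = dot d x x + 2 * t * dot d x y + t * t * dot d y y.
Proof. unfold dot; induction d as [|d IH]; simpl; [ring|]. rewrite IH; ring. Qed.

Lemma dot_lincomb_r d m x vs c :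
  dot d x (lincomb d m vs c) = fsum m (fun t => c t * dot d x (vs t)).
Proof.
  unfold dot, lincomb.
  transitivity (fsum d (fun j => fsum m (fun t => c t * (x j * vs t j)))).
  - apply fsum_ext; intros. rewrite <- fsum_scal. apply fsum_ext; intros; ring.
  - rewrite fsum_swap. apply fsum_ext; intros. apply fsum_scal.
Qed.

Lemma norm_dot d x : norm d x = sqrt (dot d x x).
Proof. unfold norm, dot. f_equal. apply fsum_ext; intros; ring. Qed.

Lemma norm_ge0 d x : 0 <= norm d x.
Proof. rewrite norm_dot; apply sqrt_pos. Qed.

Lemma norm_sqr d x : norm d x ^ 2 = dot d x x.
Proof. rewrite norm_dot, <- Rsqr_pow2. apply Rsqr_sqrt, dot_self_ge0. Qed.

Lemma norm_vsub_sym d x y : norm d (vsub x y) = norm d (vsub y x).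
Proof. unfold norm; f_equal; apply fsum_ext; intros; unfold vsub; ring. Qed.

Lemma nonneg_quadratic_discr A b C :
  0 <= A -> (forall t, 0 <= t * t * A - 2 * t * b + C) -> b * b <= A * C.
Proof.
  intros HA Hq. destruct (Req_dec A 0) as [->|HA0].
  - destruct (Req_dec b 0) as [->|Hb]; [lra|].
    specialize (Hq ((C + 1) / (2 * b))).
    replace (2 * ((C + 1) / (2 * b)) * b) with (C + 1) in Hq by (field; auto). lra.
  - specialize (Hq (b / A)).
    replace (b / A * (b / A) * A - 2 * (b / A) * b + C) with (C - b * b / A) in Hq
      by (field; auto).
    apply Rmult_le_reg_r with (/ A); [apply Rinv_0_lt_compat; lra|].
    replace (A * C * / A) with C by (field; auto). unfold Rdiv in Hq. lra.
Qed.

Lemma dot_cauchy_schwarz d x y : dot d x y * dot d x y <= dot d x x * dot d y y.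
Proof.
  rewrite (Rmult_comm (dot d x x)). apply nonneg_quadratic_discr; [apply dot_self_ge0|].
  intros t. pose proof (dot_self_ge0 d (fun j => x j + (- t) * y j)) as H.
  rewrite dot_add_scal_self, (dot_sym d x y) in H. rewrite (dot_sym d x y). lra.
Qed.

Lemma dot_le_norm d x y : dot d x y <= norm d x * norm d y.
Proof.
  pose proof (Rmult_le_pos _ _ (norm_ge0 d x) (norm_ge0 d y)).
  destruct (Rle_dec (dot d x y) 0); [lra|].
  apply Rsqr_incr_0_var; [|assumption].
  rewrite Rsqr_mult, !Rsqr_pow2, !norm_sqr.
  replace (dot d x y ^ 2) with (dot d x y * dot d x y) by ring. apply dot_cauchy_schwarz.
Qed.

Lemma norm_vsub_sqr_split d x y z :
  norm d (vsub x z) ^ 2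
  = norm d (vsub x y) ^ 2 + 2 * dot d (vsub x y) (vsub y z) + norm d (vsub y z) ^ 2.
Proof.
  rewrite !norm_sqr.
  rewrite (dot_ext d (vsub x z) (fun j => vsub x y j + 1 * vsub y z j)
             (vsub x z) (fun j => vsub x y j + 1 * vsub y z j))
    by (intros; unfold vsub; ring).
  rewrite dot_add_scal_self. ring.
Qed.

Lemma norm_vsub_triangle d x y z :
  norm d (vsub x z) <= norm d (vsub x y) + norm d (vsub y z).
Proof.
  pose proof (norm_ge0 d (vsub x y)). pose proof (norm_ge0 d (vsub y z)).
  apply Rsqr_incr_0_var; [|lra]. rewrite !Rsqr_pow2, (norm_vsub_sqr_split d x y z).
  pose proof (dot_le_norm d (vsub x y) (vsub y z)). nra.
Qed.

Lemma lincomb_lin d m vs c1 c2 al be j :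
  lincomb d m vs (fun t => al * c1 t + be * c2 t) j
  = al * lincomb d m vs c1 j + be * lincomb d m vs c2 j.
Proof. unfold lincomb; induction m as [|m IH]; simpl; [ring|]. rewrite IH; ring. Qed.

Lemma lincomb_catfam d r k vs ws c1 c2 j :
  lincomb d (r + k) (catfam r vs ws) (fun t => if Nat.ltb t r then c1 t else c2 (t - r)%nat) j
  = lincomb d r vs c1 j + lincomb d k ws c2 j.
Proof.
  unfold lincomb. rewrite fsum_add_len. f_equal; apply fsum_ext; intros t Ht; unfold catfam.
  - destruct (Nat.ltb_spec t r); [reflexivity|lia].
  - destruct (Nat.ltb_spec (r + t) r); [lia|]. now replace (r + t - r)%nat with t by lia.
Qed.

Lemma lincomb_0 d m vs j : lincomb d m vs (fun _ => 0) j = 0.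
Proof. apply fsum_eq0; intros; ring. Qed.

Lemma span_0 d m vs : span d m vs (fun _ => 0).
Proof. exists (fun _ => 0). intros j Hj. now rewrite lincomb_0. Qed.

Lemma span_lin d m vs x y al be :
  span d m vs x -> span d m vs y -> span d m vs (fun j => al * x j + be * y j).
Proof.
  intros [c1 H1] [c2 H2]. exists (fun t => al * c1 t + be * c2 t).
  intros j Hj. rewrite lincomb_lin, H1, H2 by assumption. reflexivity.
Qed.

Lemma span_ext d m vs x y :
  (forall j, (j < d)%nat -> x j = y j) -> span d m vs x -> span d m vs y.
Proof. intros Hxy [c Hc]. exists c. intros j Hj. rewrite <- Hxy by assumption. auto. Qed.

Lemma span_catfam_l d r k vs ws x : span d r vs x -> span d (r + k) (catfam r vs ws) x.
Proof.
  intros [c Hc]. exists (fun t => if Nat.ltb t r then c t else 0). intros j Hj.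
  rewrite (lincomb_catfam d r k vs ws c (fun _ => 0)), lincomb_0, Hc by assumption. ring.
Qed.

Lemma span_catfam_r d r k vs ws x : span d k ws x -> span d (r + k) (catfam r vs ws) x.
Proof.
  intros [c Hc]. exists (fun t => if Nat.ltb t r then 0 else c (t - r)%nat). intros j Hj.
  rewrite (lincomb_catfam d r k vs ws (fun _ => 0) c), lincomb_0, Hc by assumption. ring.
Qed.

Lemma is_inf_exists (E : R -> Prop) :
  (exists y, E y) -> (exists b, forall y, E y -> b <= y) -> exists m, is_inf E m.
Proof.
  intros [y0 Hy0] [b Hb].
  destruct (completeness (fun x => E (- x))) as [m [Hub Hleast]].
  - exists (- b). intros x Hx. apply Hb in Hx. lra.
  - exists (- y0). now rewrite Ropp_involutive.
  - exists (- m). split.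
    + intros y Hy. assert (- y <= m) by (apply Hub; now rewrite Ropp_involutive). lra.
    + intros c Hc. assert (m <= - c) by (apply Hleast; intros x Hx; apply Hc in Hx; lra). lra.
Qed.

Lemma Rinf_is_inf (E : R -> Prop) :
  (exists y, E y) -> (exists b, forall y, E y -> b <= y) -> is_inf E (Rinf E).
Proof. intros Hne Hlb. unfold Rinf. apply epsilon_spec, is_inf_exists; assumption. Qed.

Section SetDist.
Variables (d : nat) (x : Vec) (S : Vec -> Prop).
Hypothesis S_nonempty : exists s, S s.

Lemma setdist_is_inf : is_inf (fun v => exists s, S s /\ v = norm d (vsub x s)) (setdist d x S).
Proof.
  apply Rinf_is_inf.
  - destruct S_nonempty as [s Hs]. eauto.
  - exists 0. intros y [s [_ ->]]. apply norm_ge0.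
Qed.

Lemma setdist_le s : S s -> setdist d x S <= norm d (vsub x s).
Proof. intros Hs. apply (proj1 setdist_is_inf). eauto. Qed.

Lemma setdist_glb b : (forall s, S s -> b <= norm d (vsub x s)) -> b <= setdist d x S.
Proof. intros Hb. apply (proj2 setdist_is_inf). intros y [s [Hs ->]]. auto. Qed.

Lemma setdist_ge0 : 0 <= setdist d x S.
Proof. apply setdist_glb. intros; apply norm_ge0. Qed.

Lemma setdist_approx eta :
  0 < eta -> exists s, S s /\ norm d (vsub x s) < setdist d x S + eta.
Proof.
  intros Heta. apply NNPP. intros Hno.
  enough (setdist d x S + eta <= setdist d x S) by lra.
  apply setdist_glb. intros s Hs. apply Rnot_lt_le. intros Hlt. apply Hno. eauto.
Qed.

End SetDist.

Lemma setdist_lipschitz d x y S :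
  (exists s, S s) -> setdist d x S <= norm d (vsub x y) + setdist d y S.
Proof.
  intros HS. enough (setdist d x S - norm d (vsub x y) <= setdist d y S) by lra.
  apply setdist_glb; [assumption|]. intros s Hs.
  pose proof (setdist_le d x S HS s Hs). pose proof (norm_vsub_triangle d x y s). lra.
Qed.

Lemma setdist_antimono d x S T :
  (exists s, S s) -> (forall s, S s -> T s) -> setdist d x T <= setdist d x S.
Proof.
  intros HS HST. apply setdist_glb; [assumption|]. intros s Hs.
  apply setdist_le; [exists s|]; auto.
Qed.

Lemma SubApx_le d n k a U :
  SubApx d n k a <= fsum n (fun i => setdist d (a i) (span d k U)).
Proof.
  apply Rinf_is_inf; [now exists (fsum n (fun i => setdist d (a i) (span d k U))), U| |now exists U].
  exists 0. intros y [V ->]. apply fsum_ge0. intros. apply setdist_ge0. eexists; apply span_0.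
Qed.

Lemma Rabs_le_inv x b : Rabs x <= b -> - b <= x <= b.
Proof.
  intros H. pose proof (Rle_abs x). pose proof (Rle_abs (- x)). rewrite Rabs_Ropp in *. lra.
Qed.

Lemma sqrt_sum_sqr_le a1 b1 a2 b2 :
  sqrt (a1 ^ 2 + b1 ^ 2) <= sqrt (a2 ^ 2 + b2 ^ 2) + Rabs (a1 - a2) + Rabs (b1 - b2).
Proof.
  set (A := sqrt (a2 ^ 2 + b2 ^ 2)).
  assert (HA : 0 <= A) by apply sqrt_pos.
  assert (HA2 : A * A = a2 ^ 2 + b2 ^ 2) by (apply sqrt_sqrt; nra).
  assert (Ha : Rabs a2 <= A) by (rewrite <- sqrt_Rsqr_abs; apply sqrt_le_1_alt; unfold Rsqr; nra).
  assert (Hb : Rabs b2 <= A) by (rewrite <- sqrt_Rsqr_abs; apply sqrt_le_1_alt; unfold Rsqr; nra).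
  pose proof (Rabs_pos (a1 - a2)). pose proof (Rabs_pos (b1 - b2)).
  assert (a1 ^ 2 <= a2 ^ 2 + 2 * Rabs a2 * Rabs (a1 - a2) + Rabs (a1 - a2) ^ 2).
  { rewrite pow2_abs. pose proof (Rle_abs (a2 * (a1 - a2))). rewrite Rabs_mult in *. nra. }
  assert (b1 ^ 2 <= b2 ^ 2 + 2 * Rabs b2 * Rabs (b1 - b2) + Rabs (b1 - b2) ^ 2).
  { rewrite pow2_abs. pose proof (Rle_abs (b2 * (b1 - b2))). rewrite Rabs_mult in *. nra. }
  rewrite <- (sqrt_pow2 (A + Rabs (a1 - a2) + Rabs (b1 - b2))) by lra.
  apply sqrt_le_1_alt. nra.
Qed.

Lemma Rabs_sqrt_sum_sqr_sub a1 b1 a2 b2 :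
  Rabs (sqrt (a1 ^ 2 + b1 ^ 2) - sqrt (a2 ^ 2 + b2 ^ 2)) <= Rabs (a1 - a2) + Rabs (b1 - b2).
Proof.
  pose proof (sqrt_sum_sqr_le a1 b1 a2 b2). pose proof (sqrt_sum_sqr_le a2 b2 a1 b1).
  rewrite (Rabs_minus_sym a2), (Rabs_minus_sym b2) in *. apply Rabs_le. lra.
Qed.

(* |X - Y| (X + Y) = 2 |beta| <= 2 N w <= 2 Y w. *)
Lemma Rabs_sqrt_perturb X N D w beta :
  0 <= X -> 0 <= N -> 0 <= w ->
  X ^ 2 = N ^ 2 + D ^ 2 + 2 * beta -> beta ^ 2 <= N ^ 2 * w ^ 2 ->
  Rabs (X - sqrt (N ^ 2 + D ^ 2)) <= 2 * w.
Proof.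
  intros HX HN Hw HXe Hb. set (Y := sqrt (N ^ 2 + D ^ 2)).
  assert (HY0 : 0 <= Y) by apply sqrt_pos.
  assert (HY2 : Y * Y = N ^ 2 + D ^ 2) by (apply sqrt_sqrt; nra).
  assert (HNY : N <= Y) by nra.
  assert (Hbeta : Rabs beta <= N * w).
  { apply Rsqr_incr_0_var; [|nra]. rewrite <- Rsqr_abs, Rsqr_mult, !Rsqr_pow2. exact Hb. }
  pose proof (Rabs_le_inv _ _ Hbeta).
  apply Rabs_le. split; nra.
Qed.

Lemma pythagoras_slack eps X Y D :
  0 < eps < 1 -> 0 <= D -> 0 <= X -> 0 <= Y ->
  X ^ 2 = D ^ 2 + Y ^ 2 -> X <= (1 + eps ^ 2 / 6) * D -> Y <= eps * D.
Proof.
  intros Heps HD HX HY HXY Hle.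
  apply Rsqr_incr_0_var; [|nra]. rewrite Rsqr_mult, !Rsqr_pow2.
  assert (X ^ 2 <= ((1 + eps ^ 2 / 6) * D) ^ 2) by (apply pow_incr; lra).
  assert (eps ^ 2 <= 1) by nra.
  assert (((1 + eps ^ 2 / 6) * D) ^ 2 = D ^ 2 + eps ^ 2 * D ^ 2 * (1 / 3 + eps ^ 2 / 36))
    by field.
  assert (0 <= eps ^ 2 * D ^ 2) by nra.
  nra.
Qed.

(* D^2 - G^2 <= 2 D (D - G) = (eps D) (2 (D - G) / eps); then AM-GM. *)
Lemma sqrt_sqr_defect_le eps D G :
  0 < eps -> 0 <= G <= D -> 2 * sqrt (D ^ 2 - G ^ 2) <= eps * D + 2 * (D - G) / eps.
Proof.
  intros Heps HGD. set (z := (D - G) / eps).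
  assert (Hz : D - G = z * eps) by (unfold z; field; lra).
  assert (0 <= z) by (unfold z; apply Rmult_le_pos; [lra|apply Rlt_le, Rinv_0_lt_compat; lra]).
  replace (2 * (D - G) / eps) with (2 * z) by (unfold z; field; lra).
  assert (Hw : sqrt (D ^ 2 - G ^ 2) ^ 2 = D ^ 2 - G ^ 2) by (apply pow2_sqrt; nra).
  pose proof (sqrt_pos (D ^ 2 - G ^ 2)).
  apply Rsqr_incr_0_var; [|nra]. unfold Rsqr.
  assert (D ^ 2 - G ^ 2 <= 2 * (z * eps) * D)
    by (replace (D ^ 2 - G ^ 2) with ((D - G) * (D + G)) by ring; rewrite <- Hz; nra).
  pose proof (pow2_ge_0 (eps * D - 2 * z)). nra.
Qed.

Lemma error_budget eps O X Y :
  0 < eps < 1 -> 0 <= O -> Y <= O -> X - Y <= eps ^ 2 / 80 * O ->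
  3 * eps * X + 2 / eps * (X - Y) <= 5 * eps * O.
Proof.
  intros Heps HO HYO HXY.
  assert (2 / eps * (X - Y) <= eps * O / 40).
  { apply Rmult_le_reg_r with eps; [lra|].
    replace (2 / eps * (X - Y) * eps) with (2 * (X - Y)) by (field; lra). nra. }
  assert (eps ^ 2 <= 1) by nra.
  assert (3 * eps * X <= 3 * eps * (O + eps ^ 2 / 80 * O)) by (apply Rmult_le_compat_l; lra).
  assert (eps * (eps ^ 2 * O) <= eps * O) by (apply Rmult_le_compat_l; nra).
  nra.
Qed.

Definition orth_proj (d r : nat) (B : nat -> Vec) (a : Vec) : Vec :=
  lincomb d r B (fun t => dot d a (B t)).

Section Projection.
Variables (d r : nat) (B : nat -> Vec) (a : Vec).
Hypothesis B_orthonormal : orthonormal d r B.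

Lemma orth_proj_span : span d r B (orth_proj d r B a).
Proof. eexists; reflexivity. Qed.

Lemma dot_residual_basis t : (t < r)%nat -> dot d (vsub a (orth_proj d r B a)) (B t) = 0.
Proof.
  intros Ht. rewrite dot_vsub_l, (dot_sym d (orth_proj d r B a)). unfold orth_proj.
  rewrite dot_lincomb_r.
  rewrite (fsum_ext _ _ (fun u => dot d a (B u) * (if Nat.eqb t u then 1 else 0)))
    by (intros u Hu; rewrite <- (B_orthonormal t u) by assumption; reflexivity).
  rewrite fsum_kronecker by assumption. rewrite dot_sym. ring.
Qed.

Lemma dot_residual_span v : span d r B v -> dot d (vsub a (orth_proj d r B a)) v = 0.
Proof.
  intros [c Hc]. rewrite (dot_ext d _ _ v (lincomb d r B c)) by auto.
  rewrite dot_lincomb_r. apply fsum_eq0. intros t Ht. rewrite dot_residual_basis by assumption.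
  ring.
Qed.

Lemma norm_vsub_span_sqr v : span d r B v ->
  norm d (vsub a v) ^ 2
  = norm d (vsub a (orth_proj d r B a)) ^ 2 + norm d (vsub (orth_proj d r B a) v) ^ 2.
Proof.
  intros Hv. rewrite (norm_vsub_sqr_split d a (orth_proj d r B a) v), dot_residual_span; [ring|].
  apply (span_ext d r B (fun j => 1 * orth_proj d r B a j + (-1) * v j));
    [intros; unfold vsub; ring|].
  apply span_lin; [apply orth_proj_span | assumption].
Qed.

Lemma setdist_span_orth_proj :
  setdist d a (span d r B) = norm d (vsub a (orth_proj d r B a)).
Proof.
  assert (HP : exists v, span d r B v) by (eexists; apply orth_proj_span).
  apply Rle_antisym.
  - apply setdist_le; [assumption|apply orth_proj_span].
  - apply setdist_glb; [assumption|]. intros v Hv. pose proof (norm_vsub_span_sqr v Hv).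
    pose proof (norm_ge0 d (vsub a (orth_proj d r B a))). pose proof (norm_ge0 d (vsub a v)).
    pose proof (norm_ge0 d (vsub (orth_proj d r B a) v)). nra.
Qed.

End Projection.

Section Shape.
Variables (d r k : nat) (B U : nat -> Vec) (S : Vec -> Prop) (a : Vec).
Hypothesis B_orthonormal : orthonormal d r B.
Hypothesis S_nonempty : exists s, S s.
Hypothesis S_sub_span : forall x, S x -> span d k U x.

Let p := orth_proj d r B a.
Let PW := span d (r + k) (catfam r B U).
Let D := setdist d a (span d r B).
Let G := setdist d a PW.

Let D_eq : D = norm d (vsub a p).
Proof. apply setdist_span_orth_proj, B_orthonormal. Qed.

Let PW_orth_proj : PW p.
Proof. apply span_catfam_l, orth_proj_span. Qed.

Lemma setdist_sum_span_bounds : 0 <= G <= D.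
Proof.
  split; [apply setdist_ge0; now exists p|].
  rewrite D_eq. apply setdist_le; [now exists p | exact PW_orth_proj].
Qed.

Lemma dot_residual_shape_sqr_le s : S s ->
  dot d (vsub a p) (vsub p s) ^ 2 <= norm d (vsub p s) ^ 2 * (D ^ 2 - G ^ 2).
Proof.
  intros Hs. rewrite norm_sqr.
  replace (dot d (vsub a p) (vsub p s) ^ 2)
    with (- dot d (vsub a p) (vsub p s) * - dot d (vsub a p) (vsub p s)) by ring.
  apply nonneg_quadratic_discr; [apply dot_self_ge0|]. intros t.
  set (y := fun j => (1 - t) * p j + t * s j).
  assert (Hy : PW y) by (apply span_lin; [exact PW_orth_proj | apply span_catfam_r; auto]).
  assert (HGy : G <= norm d (vsub a y)) by (apply setdist_le; [now exists p | exact Hy]).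
  assert (Hay : norm d (vsub a y) ^ 2
                = D ^ 2 + 2 * t * dot d (vsub a p) (vsub p s)
                  + t * t * dot d (vsub p s) (vsub p s)).
  { rewrite D_eq, !norm_sqr, <- dot_add_scal_self.
    apply dot_ext; intros; unfold y, vsub; ring. }
  pose proof setdist_sum_span_bounds.
  assert (G ^ 2 <= norm d (vsub a y) ^ 2) by (apply pow_incr; lra).
  lra.
Qed.

Lemma norm_vsub_shape_le s : S s ->
  Rabs (norm d (vsub a s) - sqrt (norm d (vsub p s) ^ 2 + D ^ 2)) <= 2 * sqrt (D ^ 2 - G ^ 2).
Proof.
  intros Hs. apply Rabs_sqrt_perturb with (beta := dot d (vsub a p) (vsub p s));
    [apply norm_ge0 | apply norm_ge0 | apply sqrt_pos | |].
  - rewrite (norm_vsub_sqr_split d a p s), D_eq. ring.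
  - rewrite pow2_sqrt by (pose proof setdist_sum_span_bounds; nra).
    now apply dot_residual_shape_sqr_le.
Qed.

Lemma setdist_shape_orth_proj :
  Rabs (sqrt (setdist d p S ^ 2 + D ^ 2) - setdist d a S) <= 2 * sqrt (D ^ 2 - G ^ 2).
Proof.
  pose proof (setdist_ge0 d p S S_nonempty).
  apply Rabs_le. split; apply Rle_plus_epsilon; intros eta Heta.
  - destruct (setdist_approx d p S S_nonempty eta Heta) as [s [Hs Hlt]].
    pose proof (setdist_le d a S S_nonempty s Hs).
    pose proof (setdist_le d p S S_nonempty s Hs).
    pose proof (Rabs_le_inv _ _ (norm_vsub_shape_le s Hs)).
    pose proof (sqrt_sum_sqr_le (norm d (vsub p s)) D (setdist d p S) D) as Hmove.
    rewrite Rminus_diag, Rabs_R0, (Rabs_right (_ - _)) in Hmove by lra. lra.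
  - destruct (setdist_approx d a S S_nonempty eta Heta) as [s [Hs Hlt]].
    pose proof (setdist_le d p S S_nonempty s Hs).
    pose proof (Rabs_le_inv _ _ (norm_vsub_shape_le s Hs)).
    assert (sqrt (setdist d p S ^ 2 + D ^ 2) <= sqrt (norm d (vsub p s) ^ 2 + D ^ 2))
      by (apply sqrt_le_1_alt; apply Rplus_le_compat_r, pow_incr; lra).
    lra.
Qed.

Lemma setdist_shape_approx eps q apx :
  0 < eps < 1 -> span d r B q ->
  norm d (vsub a q) <= (1 + eps ^ 2 / 6) * D ->
  (1 - eps ^ 2 / 6) * D <= apx <= (1 + eps ^ 2 / 6) * D ->
  Rabs (sqrt (setdist d q S ^ 2 + apx ^ 2) - setdist d a S)
    <= 3 * eps * D + 2 / eps * (D - G).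
Proof.
  intros Heps Hq Haq Hapx.
  pose proof setdist_sum_span_bounds as HGD.
  assert (Hpq : norm d (vsub p q) <= eps * D).
  { apply (pythagoras_slack eps (norm d (vsub a q))); try apply norm_ge0; try lra.
    rewrite D_eq. now apply norm_vsub_span_sqr. }
  assert (Hdist : Rabs (setdist d q S - setdist d p S) <= eps * D).
  { pose proof (setdist_lipschitz d q p S S_nonempty).
    pose proof (setdist_lipschitz d p q S S_nonempty).
    rewrite (norm_vsub_sym d q p) in *. apply Rabs_le. lra. }
  assert (Happ : Rabs (apx - D) <= eps * D) by (apply Rabs_le; nra).
  pose proof (Rabs_sqrt_sum_sqr_sub (setdist d q S) apx (setdist d p S) D) as Hmove.
  pose proof setdist_shape_orth_proj as Hproj.
  pose proof (sqrt_sqr_defect_le eps D G ltac:(lra) HGD).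
  apply Rabs_le_inv in Hmove. apply Rabs_le_inv in Hproj. apply Rabs_le. lra.
Qed.

End Shape.

Theorem theorem4 (d n k r : nat) (a : nat -> Vec) (eps : R) (B : nat -> Vec)
  (aB : nat -> (nat -> R)) (apx : nat -> R) :
  (1 <= k)%nat -> 0 < eps < 1 ->
  orthonormal d r B ->
  (* P := span d r B; P + W is spanned by the columns of B and of U *)
  (forall U : nat -> Vec,
     fsum n (fun i => setdist d (a i) (span d r B))
     - fsum n (fun i => setdist d (a i) (span d (r + k) (catfam r B U)))
     <= eps ^ 2 / 80 * SubApx d n k a) ->
  (forall i, (i < n)%nat ->
     norm d (vsub (a i) (lincomb d r B (aB i)))
       <= (1 + eps ^ 2 / 6) * setdist d (a i) (span d r B)) ->
  (forall i, (i < n)%nat ->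
     (1 - eps ^ 2 / 6) * setdist d (a i) (span d r B) <= apx i /\
     apx i <= (1 + eps ^ 2 / 6) * setdist d (a i) (span d r B)) ->
  forall (S : Vec -> Prop) (U : nat -> Vec),
    (exists s, S s) ->
    (forall x, S x -> span d k U x) ->
    (1 - 5 * eps) * fsum n (fun i => setdist d (a i) S)
      <= fsum n (fun i => sqrt (setdist d (lincomb d r B (aB i)) S ^ 2 + apx i ^ 2)) /\
    fsum n (fun i => sqrt (setdist d (lincomb d r B (aB i)) S ^ 2 + apx i ^ 2))
      <= (1 + 5 * eps) * fsum n (fun i => setdist d (a i) S).
Proof.
  intros _ Heps HB Hgood HaB Hapx S U HS HSU.
  set (D := fun i => setdist d (a i) (span d r B)).
  set (G := fun i => setdist d (a i) (span d (r + k) (catfam r B U))).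
  set (dS := fun i => setdist d (a i) S).
  assert (Hsum : Rabs (fsum n (fun i => sqrt (setdist d (lincomb d r B (aB i)) S ^ 2 + apx i ^ 2))
                       - fsum n dS)
                 <= 3 * eps * fsum n D + 2 / eps * (fsum n D - fsum n G)).
  { rewrite <- (fsum_sub n D G), <- !fsum_scal, <- fsum_add.
    apply Rabs_fsum_sub_le. intros i Hi.
    apply (setdist_shape_approx d r k B U); auto. eexists; reflexivity. }
  assert (HG : fsum n G <= fsum n dS).
  { apply fsum_le. intros i Hi. apply setdist_antimono; [assumption|].
    intros s Hs. now apply span_catfam_r, HSU. }
  assert (HSub : SubApx d n k a <= fsum n dS).
  { eapply Rle_trans; [apply (SubApx_le d n k a U)|].
    apply fsum_le. intros i Hi. now apply setdist_antimono. }
  assert (HD : fsum n D - fsum n G <= eps ^ 2 / 80 * fsum n dS).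
  { eapply Rle_trans; [apply Hgood|]. apply Rmult_le_compat_l; nra. }
  pose proof (fsum_ge0 n dS (fun i _ => setdist_ge0 d (a i) S HS)).
  pose proof (error_budget eps (fsum n dS) (fsum n D) (fsum n G) Heps).
  apply Rabs_le_inv in Hsum. lra.
Qed.
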